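(* Let $G=(V,E)$ be a graph with nonnegative edge lengths $l_e$, root $r$, and integer demands $d_v>0$ on a set of demand nodes, with total demand $D$. Fix $\epsilon>0$, $\gamma>1$, $\delta>1$, let $K=\lceil \log_{1+\epsilon} D\rceil$, $M_i=(1+\epsilon)^i$, $A_i(x)=\min\{x,M_i\}$, and let $T_i^*$ be an optimal routing tree for $A_i$ ($0\le i\le K$). Run the following procedure: (1) for each $i$ let $T_i$ be a routing tree returned by a deterministic $\lambda$-approximation algorithm for SSRoB with cost function $A_i$; (2) for $i=1,\dots,K$ in increasing order, if $A_i(T_{i-1})<A_i(T_i)$ set $T_i\leftarrow T_{i-1}$; (3) for $i=K-1,\dots,0$ in decreasing order, if $A_i(T_{i+1})<A_i(T_i)$ set $T_i\leftarrow T_{i+1}$; (4) compute the rent cost $R_i$ and normalized buy cost $B_i$ of each resulting $T_i$; (5) set $L_B=\emptyset$, $B=\infty$, and for $i=0,\dots,K$ in increasing order, if $B_i<B/\gamma$ then add $i$ to $L_B$ and set $B\leftarrow B_i$; (6) set $L=\emptyset$, $R=\infty$, and for each $i\in L_B$ in decreasing order, if $R_i<R/\delta$ then add $i$ to $L$ and set $R\leftarrow R_i$. Suppose there exist a routing tree $T$ and constants $c_B,c_R$ such that for every $i\in L$ there is a partition of the edges of $T$ into two sets $T_{B_i}$ and $T_{R_i}$ with $A_0(T_{B_i})\le c_B B_i$ and $A_K(T_{R_i})\le c_R R_i$. Then for all $k\in\{0,\dots,K\}$, $A_k(T)\le \max\{c_B\gamma,\,c_R\delta\}\,\lambda\, A_k(T_k^*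 )$.
   Context: A routing tree is a tree in $G$ containing $r$ and all demand nodes; each demand node $v$ sends $d_v$ units of flow to $r$ along its unique tree path, and $x_e$ denotes the total flow on edge $e$. For a function $f$ and a routing tree $T$, $f(T)=\sum_{e\in T} l_e f(x_e)$; for a subset $S$ of edges of $T$, $f(S)=\sum_{e\in S} l_e f(x_e)$ with $x_e$ the flows in $T$. The single-sink rent-or-buy (SSRoB) problem with parameter $M$ is to find a routing tree minimizing $A(T)$ for $A(x)=\min\{x,M\}$; a $\lambda$-approximation algorithm returns a routing tree of cost at most $\lambda$ times optimal. For a routing tree $T_i$ with flows $x_e$, its rent cost is $R_i=\sum_{e\in T_i,\,x_e<M_i} l_e A_i(x_e)$ and its normalized buy cost is $B_i=\sum_{e\in T_i,\,x_e\ge M_i} l_e$. *)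

From HB Require Import structures.
From mathcomp Require Import all_boot all_order all_algebra.
From mathcomp Require Import reals exp.
Set Implicit Arguments. Unset Strict Implicit. Unset Printing Implicit Defensive.
Import Order.TTheory GRing.Theory Num.Theory.
Local Open Scope ring_scope.

(* A routing tree containing the root r is encoded by its vertex set together
   with, for every non-root tree vertex v, the edge of the tree joining v to
   its parent (the next vertex on the unique tree path from v to r). *)
Section Routing.
Variables (R : realType) (V E : finType) (src tgt : E -> V) (l : E -> R)
          (r : V) (dem : {set V}) (d : V -> nat).

Definition rtree := ({set V} * (V -> E))%type.

Definition par (T : rtree) (v : V) : V :=
  if v == r then r
  else let e := T.2 v in if src e == v then tgt e else src e.

Definition is_routing_tree (T : rtree) : Prop :=
  [/\ r \in T.1, dem \subset T.1,
      (forall v, v \in T.1 -> v != r -> (src (T.2 v) == v) || (tgt (T.2 v) == v)),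
      (forall v, v \in T.1 -> par T v \in T.1)
    & (forall v, v \in T.1 -> iter #|V| (par T) v = r)].

Definition tree_edges (T : rtree) : {set E} := [set T.2 v | v in [set v in T.1 | v != r]].

Definition on_path (T : rtree) (w v : V) : bool :=
  [exists k : 'I_#|V|.+1, iter k (par T) w == v].

(* flow on the tree edge (pe v) joining v to its parent *)
Definition flow (T : rtree) (v : V) : R :=
  (\sum_(w in dem | on_path T w v) d w)%:R.

Definition cost (f : R -> R) (T : rtree) : R :=
  \sum_(v in T.1 | v != r) l (T.2 v) * f (flow T v).

Definition costS (f : R -> R) (T : rtree) (S : {set E}) : R :=
  \sum_(v in T.1 | (v != r) && (T.2 v \in S)) l (T.2 v) * f (flow T v).

Variable eps : R.
Definition Mi (i : nat) : R := (1 + eps) ^+ i.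
Definition Ai (i : nat) (x : R) : R := Num.min x (Mi i).

Definition rent (i : nat) (T : rtree) : R :=
  \sum_(v in T.1 | (v != r) && (flow T v < Mi i)) l (T.2 v) * Ai i (flow T v).
Definition buy (i : nat) (T : rtree) : R :=
  \sum_(v in T.1 | (v != r) && (Mi i <= flow T v)) l (T.2 v).

Variables (K : nat) (T0 : nat -> rtree) (gam del : R).

Fixpoint fwd (i : nat) : rtree :=
  match i with
  | 0 => T0 0
  | i'.+1 => if cost (Ai i) (fwd i') < cost (Ai i) (T0 i) then fwd i' else T0 i
  end.

(* step (3): backward pass; bwd n is the tree at index K - n *)
Fixpoint bwd (n : nat) : rtree :=
  match n with
  | 0 => fwd K
  | n'.+1 => let i := (K - n)%N in
             if cost (Ai i) (bwd n') < cost (Ai i) (fwd i) then bwd n' else fwd i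
  end.

Definition final (i : nat) : rtree := bwd (K - i).

(* None encodes +infinity *)
Definition lt_over (x : R) (c : R) (o : option R) : bool :=
  if o is Some y then x < y / c else true.

Definition LB_step (st : seq nat * option R) (i : nat) : seq nat * option R :=
  let Bi := buy i (final i) in
  if lt_over Bi gam st.2 then (rcons st.1 i, Some Bi) else st.
Definition LB : seq nat := (foldl LB_step ([::], None) (iota 0 K.+1)).1.

Definition L_step (st : seq nat * option R) (i : nat) : seq nat * option R :=
  let Ri := rent i (final i) in
  if lt_over Ri del st.2 then (rcons st.1 i, Some Ri) else st.
Definition L : seq nat := (foldl L_step ([::], None) (rev LB)).1.

End Routing.

Definition Kof (R : realType) (eps : R) (D : nat) : int :=
  Num.ceil (ln (D%:R : R) / ln (1 + eps)).

From mathcomp Require Import all_boot all_order all_algebra.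
From mathcomp Require Import reals.
From mathcomp Require Import ring lra.
Set Implicit Arguments. Unset Strict Implicit.
Import Order.TTheory GRing.Theory Num.Theory.
Local Open Scope ring_scope.

(* Write A_i = R_i + M_i B_i.  After the two passes, A_i(T_i) <= A_i(T_(i+1))
   and A_(i+1)(T_(i+1)) <= A_(i+1)(T_i); since A_(i+1) - A_i is squeezed
   between (M_(i+1) - M_i) B_(i+1) and (M_(i+1) - M_i) B_i, this forces
   B_i(T_i) to decrease and R_i(T_i) to increase with i.  Given k, the scan
   building L_B finds j <= k in L_B with B_j <= gam B_k, and the scan building
   L finds i >= j in L with R_i <= del R_j; monotonicity then gives
   B_i <= gam B_k and R_i <= del R_k.  As flows are integral,
   A_k <= M_k A_0 on the edges of T_(B_i) and A_k <= A_K on the others, so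
   A_k(T) <= M_k c_B B_i + c_R R_i <= max(c_B gam, c_R del) A_k(T_k), and
   A_k(T_k) <= lam A_k(T*_k). *)

Section MinCap.
Variable R : realDomainType.
Implicit Types x a b m : R.

Lemma min_decomp x a : Num.min x a = (x < a)%R%:R * x + a * (a <= x)%R%:R.
Proof. by case: (ltP x a) => _ /=; rewrite ?mulr1n ?mulr0n; lra. Qed.

Lemma min_le_decomp x a b : a <= b ->
  Num.min x a <= (x < b)%R%:R * x + a * (b <= x)%R%:R.
Proof.
by move=> hab; case: (ltP x a) => ?; case: (ltP x b) => ? /=;
  rewrite ?mulr1n ?mulr0n; lra.
Qed.

Lemma min_sub_le x a b : a <= b ->
  Num.min x b - Num.min x a <= (b - a) * (a <= x)%R%:R.
Proof.
by move=> hab; case: (ltP x a) => ?; case: (ltP x b) => ? /=;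
  rewrite ?mulr1n ?mulr0n; lra.
Qed.

Lemma min_sub_ge x a b : a <= b ->
  (b - a) * (b <= x)%R%:R <= Num.min x b - Num.min x a.
Proof.
by move=> hab; case: (ltP x a) => ?; case: (ltP x b) => ? /=;
  rewrite ?mulr1n ?mulr0n; lra.
Qed.

(* Flows are integers, so a flow below the unit capacity is zero. *)
Lemma min_nat_le_scale (n : nat) m : 1 <= m ->
  Num.min n%:R m <= m * Num.min n%:R 1.
Proof.
case: n => [|n] hm; first by rewrite !min_l ?mulr0 //; lra.
by rewrite (min_r (ler1n R n.+1)) mulr1 ge_min lexx orbT.
Qed.

End MinCap.

Lemma ler_mul_of_le_scaled (R : realDomainType) (c g m x y : R) :
  0 <= x -> 0 <= y -> x <= g * y -> c * g <= m -> 0 <= m -> c * x <= m * y.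
Proof.
move=> x_ge0 y_ge0 xy cgm m_ge0; case: (leP 0 c) => [c_ge0|c_lt0].
- by rewrite (le_trans (ler_wpM2l c_ge0 xy)) // mulrA ler_wpM2r.
- by rewrite (@le_trans _ _ 0) ?mulr_ge0 // nmulr_rle0.
Qed.

Section Select.
Variables (R : realDomainType) (T : Type) (f : T -> R) (a b : T).

Lemma select_le_l : f (if f a < f b then a else b) <= f a.
Proof. by case: ifP => [_|/negbT]; rewrite ?lexx // -leNgt. Qed.

Lemma select_le_r : f (if f a < f b then a else b) <= f b.
Proof. by case: ifP => [/ltW|_] //; rewrite lexx. Qed.

End Select.

Lemma pairwise_rev (T : Type) (ord : rel T) (s : seq T) :
  pairwise ord s -> pairwise (fun a b => ord b a) (rev s).
Proof.
elim: s => [|x s IH] //=; rewrite rev_cons pairwise_rcons all_rev.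
by case/andP=> hx hs; rewrite hx IH.
Qed.

Section Greedy.
Variables (R : realType) (f : nat -> R) (c : R).

Definition greedy_step (st : seq nat * option R) (i : nat) :=
  if lt_over (f i) c st.2 then (rcons st.1 i, Some (f i)) else st.

Definition greedy_state (s : seq nat) := foldl greedy_step ([::], None) s.

Lemma greedy_subseq s : subseq (greedy_state s).1 s.
Proof.
elim/last_ind: s => [|s x IH] //.
rewrite /greedy_state foldl_rcons -/(greedy_state s).
rewrite /greedy_step; case: ifP => _ /=; first by rewrite -!cats1 subseq_cat2r.
exact: subseq_trans IH (subseq_rcons s x).
Qed.

Lemma greedy_state_last s v : (greedy_state s).2 = Some v ->
  exists2 y, y \in (greedy_state s).1 & v = f y.
Proof.
elim/last_ind: s v => [|s x IH] v //.
rewrite /greedy_state foldl_rcons -/(greedy_state s).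
rewrite /greedy_step; case: ifP => _ /=; last exact: IH.
by case=> <-; exists x; rewrite ?mem_rcons ?mem_head.
Qed.

Hypotheses (c_ge1 : 1 <= c) (f_ge0 : forall i, 0 <= f i).

Lemma greedy_cover (ord : rel nat) s x : pairwise ord s -> x \in s ->
  exists2 y, y \in (greedy_state s).1 & (f y <= c * f x) && ((y == x) || ord y x).
Proof.
elim/last_ind: s x => [|s z IH] x //.
rewrite pairwise_rcons => /andP[/allP ord_z ord_s].
rewrite mem_rcons inE /greedy_state foldl_rcons -/(greedy_state s) /greedy_step.
case: ifP => [_|not_lt] /=.
  case/orP=> [/eqP->|xs].
    by exists z; rewrite ?mem_rcons ?mem_head ?eqxx ?ler_peMl ?andbT.
  by have [y ys hy] := IH x ord_s xs; exists y; rewrite // mem_rcons inE ys orbT.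
case/orP=> [/eqP->|]; last exact: IH.
move: not_lt; rewrite /lt_over; case E: (greedy_state s).2 => [v|] // /negbT.
have [y ys ->] := greedy_state_last E.
rewrite -leNgt ler_pdivrMr ?(lt_le_trans ltr01) // mulrC => hy.
by exists y; rewrite // hy ord_z ?orbT // (mem_subseq (greedy_subseq s) ys).
Qed.

End Greedy.

Section RoutingTrees.
Variables (R : realType) (V E : finType) (src tgt : E -> V) (l : E -> R)
  (r : V) (dem : {set V}) (d : V -> nat) (eps : R).
Hypothesis l_ge0 : forall e, 0 <= l e.
Hypothesis eps_gt0 : 0 < eps.

Local Notation cost := (cost src tgt l r dem d).
Local Notation costS := (costS src tgt l r dem d).
Local Notation rent := (rent src tgt l r dem d eps).
Local Notation buy := (buy src tgt l r dem d eps).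
Local Notation flow := (flow R src tgt r dem d).
Local Notation Mi := (Mi eps).
Local Notation Ai := (Ai eps).

Lemma Mi0 : Mi 0 = 1.
Proof. exact: expr0. Qed.

Lemma Mi_gt0 i : 0 < Mi i.
Proof. exact: exprn_gt0 (addr_gt0 ltr01 eps_gt0). Qed.

Lemma Mi_le i j : (i <= j)%N -> Mi i <= Mi j.
Proof. by apply: ler_weXn2l; rewrite lerDl ltW. Qed.

Lemma Mi_ltS i : Mi i < Mi i.+1.
Proof. by rewrite /Mi ltr_eXn2l ?ltnSn // ltrDl. Qed.

Lemma Ai_ge0 i x : 0 <= x -> 0 <= Ai i x.
Proof. by move=> hx; rewrite /Ai le_min hx ltW // Mi_gt0. Qed.

Lemma cost_ge0 i T : 0 <= cost (Ai i) T.
Proof. by apply: sumr_ge0 => v _; rewrite mulr_ge0 // Ai_ge0 ?ler0n. Qed.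

Lemma rent_ge0 i T : 0 <= rent i T.
Proof. by apply: sumr_ge0 => v _; rewrite mulr_ge0 // Ai_ge0 ?ler0n. Qed.

Lemma buy_ge0 i T : 0 <= buy i T.
Proof. exact: sumr_ge0. Qed.

Lemma rentE i T : rent i T =
  \sum_(v in T.1 | v != r) l (T.2 v) * ((flow T v < Mi i)%R%:R * flow T v).
Proof.
rewrite /rent (eq_bigl _ _ (fun v => andbA _ _ _)) big_mkcondr.
apply: eq_bigr => v _; case: ifP => h; rewrite ?mul0r ?mulr0 //.
by rewrite mul1r /Ai min_l // ltW.
Qed.

Lemma buyE i T : buy i T =
  \sum_(v in T.1 | v != r) l (T.2 v) * (Mi i <= flow T v)%R%:R.
Proof.
rewrite /buy (eq_bigl _ _ (fun v => andbA _ _ _)) big_mkcondr.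
by apply: eq_bigr => v _; case: ifP; rewrite ?mulr1 ?mulr0.
Qed.

Lemma costSE f T S : costS f T S =
  \sum_(v in T.1 | v != r) l (T.2 v) * ((T.2 v \in S)%:R * f (flow T v)).
Proof.
rewrite /costS (eq_bigl _ _ (fun v => andbA _ _ _)) big_mkcondr.
by apply: eq_bigr => v _; case: ifP; rewrite ?mul1r ?mul0r ?mulr0.
Qed.

Lemma costS_setDE f T S : costS f T (tree_edges r T :\: S) =
  \sum_(v in T.1 | v != r) l (T.2 v) * ((T.2 v \notin S)%:R * f (flow T v)).
Proof.
rewrite costSE; apply: eq_bigr => v hv.
by rewrite in_setD (imset_f (T.2)) ?inE ?andbT.
Qed.

Lemma cost_split i T : cost (Ai i) T = rent i T + Mi i * buy i T.
Proof.
rewrite rentE buyE mulr_sumr -big_split; apply: eq_bigr => v _.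
by rewrite /= /Ai min_decomp; ring.
Qed.

Lemma cost_succ_sub_le i T :
  cost (Ai i.+1) T - cost (Ai i) T <= (Mi i.+1 - Mi i) * buy i T.
Proof.
rewrite buyE -sumrB mulr_sumr; apply: ler_sum => v _.
rewrite -mulrBr mulrCA ler_wpM2l //.
exact/min_sub_le/ltW/Mi_ltS.
Qed.

Lemma cost_succ_sub_ge i T :
  (Mi i.+1 - Mi i) * buy i.+1 T <= cost (Ai i.+1) T - cost (Ai i) T.
Proof.
rewrite buyE -sumrB mulr_sumr; apply: ler_sum => v _.
rewrite -mulrBr mulrCA ler_wpM2l //.
exact/min_sub_ge/ltW/Mi_ltS.
Qed.

Lemma cost_le_rent_buyS i T : cost (Ai i) T <= rent i.+1 T + Mi i * buy i.+1 T.
Proof.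
rewrite rentE buyE mulr_sumr -big_split; apply: ler_sum => v _.
rewrite /= [X in _ <= _ + X]mulrCA -mulrDr ler_wpM2l //.
exact/min_le_decomp/ltW/Mi_ltS.
Qed.

Lemma buy_rent_exchange i P Q :
  cost (Ai i) P <= cost (Ai i) Q -> cost (Ai i.+1) Q <= cost (Ai i.+1) P ->
  buy i.+1 Q <= buy i P /\ rent i P <= rent i.+1 Q.
Proof.
move=> leP leQ.
have dM_gt0 : 0 < Mi i.+1 - Mi i by rewrite subr_gt0 Mi_ltS.
have buy_le : buy i.+1 Q <= buy i P.
  rewrite -(ler_pM2l dM_gt0).
  have := cost_succ_sub_le i P; have := cost_succ_sub_ge i Q; lra.
split=> //.
have := cost_split i P; have := cost_le_rent_buyS i Q.
have := ler_wpM2l (ltW (Mi_gt0 i)) buy_le; lra.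
Qed.

Lemma cost_le_split k K T S : (k <= K)%N ->
  cost (Ai k) T <= Mi k * costS (Ai 0) T S + costS (Ai K) T (tree_edges r T :\: S).
Proof.
move=> lekK; rewrite costSE costS_setDE mulr_sumr -big_split.
apply: ler_sum => v _ /=; rewrite mulrCA -mulrDr ler_wpM2l //.
case: (T.2 v \in S) => /=; rewrite ?mul1r ?mul0r ?mulr0 ?addr0 ?add0r /Ai.
- by rewrite Mi0 min_nat_le_scale // -Mi0 Mi_le.
- by rewrite le_min2 // Mi_le.
Qed.

Variables (K : nat) (T0 : nat -> rtree V E).

Local Notation fwd := (fwd src tgt l r dem d eps T0).
Local Notation final := (final src tgt l r dem d eps K T0).

Lemma fwdS i : fwd i.+1 =
  if cost (Ai i.+1) (fwd i) < cost (Ai i.+1) (T0 i.+1) then fwd i else T0 i.+1.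
Proof. by []. Qed.

Lemma finalS i : (i < K)%N -> final i =
  if cost (Ai i) (final i.+1) < cost (Ai i) (fwd i) then final i.+1 else fwd i.
Proof.
move=> ltiK; rewrite /final -(subnSK ltiK) /=.
by rewrite subnSK // subKn // ltnW.
Qed.

Lemma finalK : final K = fwd K.
Proof. by rewrite /final subnn. Qed.

Lemma fwd_le_T0 i : cost (Ai i) (fwd i) <= cost (Ai i) (T0 i).
Proof. by case: i => [|i]; rewrite ?lexx // fwdS select_le_r. Qed.

Lemma fwd_succ_le i : cost (Ai i.+1) (fwd i.+1) <= cost (Ai i.+1) (fwd i).
Proof. by rewrite fwdS select_le_l. Qed.

Lemma final_le_fwd i : (i <= K)%N -> cost (Ai i) (final i) <= cost (Ai i) (fwd i).
Proof.
rewrite leq_eqVlt => /orP[/eqP->|ltiK]; first by rewrite finalK lexx.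
by rewrite finalS // select_le_r.
Qed.

Lemma final_le_T0 i : (i <= K)%N -> cost (Ai i) (final i) <= cost (Ai i) (T0 i).
Proof. by move=> leiK; apply: le_trans (final_le_fwd leiK) (fwd_le_T0 i). Qed.

Lemma final_costs_adjacent i : (i < K)%N ->
  cost (Ai i) (final i) <= cost (Ai i) (final i.+1) /\
  cost (Ai i.+1) (final i.+1) <= cost (Ai i.+1) (final i).
Proof.
move=> ltiK; split; first by rewrite finalS // select_le_l.
rewrite [final i]finalS //; case: ifP => _; first exact: lexx.
exact: le_trans (final_le_fwd ltiK) (fwd_succ_le i).
Qed.

Lemma final_buy_rent_mono j i : (j <= i)%N -> (i <= K)%N ->
  buy i (final i) <= buy j (final j) /\ rent j (final j) <= rent i (final i).
Proof.
elim: i => [|i IH] leji leiK.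
  by move: leji; rewrite leqn0 => /eqP->; rewrite !lexx.
move: leji; rewrite leq_eqVlt => /orP[/eqP->|ltji]; first by rewrite !lexx.
have [buy_le rent_le] := IH ltji (ltnW leiK).
have [leP leQ] := final_costs_adjacent leiK.
have [buy_le' rent_le'] := buy_rent_exchange leP leQ.
by split; [exact: le_trans buy_le' buy_le | exact: le_trans rent_le rent_le'].
Qed.

Variables (gam del : R).
Hypotheses (gam_ge1 : 1 <= gam) (del_ge1 : 1 <= del).

Local Notation buy_at i := (buy i (final i)).
Local Notation rent_at i := (rent i (final i)).

Lemma exists_selected_index k : (k <= K)%N ->
  exists2 i, i \in L src tgt l r dem d eps K T0 gam del &
    buy_at i <= gam * buy_at k /\ rent_at i <= del * rent_at k.
Proof.
move=> lekK.
have iota_lt : pairwise ltn (iota 0 K.+1).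
  by rewrite -sorted_pairwise ?iota_ltn_sorted //; apply: ltn_trans.
have [|j jLB /andP[buy_j]] :=
  greedy_cover (f := fun i => buy_at i) gam_ge1 (fun i => buy_ge0 _ _) iota_lt (x := k).
  by rewrite mem_iota ltnS.
rewrite -leq_eqVlt => lejk.
have LB_lt := subseq_pairwise (greedy_subseq (fun i => buy_at i) gam _) iota_lt.
have [|i iL /andP[rent_i]] :=
  greedy_cover (f := fun i => rent_at i) del_ge1 (fun i => rent_ge0 _ _)
    (pairwise_rev LB_lt) (x := j).
  by rewrite mem_rev.
rewrite eq_sym -leq_eqVlt => leji.
have leiK : (i <= K)%N.
  have LB_iota := greedy_subseq (fun i => buy_at i) gam (iota 0 K.+1).
  have L_LB := greedy_subseq (fun i => rent_at i) del
    (rev (LB src tgt l r dem d eps K T0 gam)).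
  suff : i \in iota 0 K.+1 by rewrite mem_iota ltnS.
  by rewrite (mem_subseq LB_iota) // -mem_rev (mem_subseq L_LB).
have [buy_ij _] := final_buy_rent_mono leji leiK.
have [_ rent_jk] := final_buy_rent_mono lejk lekK.
exists i => //; split.
- exact: le_trans buy_ij buy_j.
- by apply: le_trans rent_i _; rewrite ler_wpM2l // (le_trans ler01).
Qed.

Lemma cost_le_scaled_final T S i k (cB cR m : R) : (k <= K)%N ->
  costS (Ai 0) T S <= cB * buy_at i ->
  costS (Ai K) T (tree_edges r T :\: S) <= cR * rent_at i ->
  buy_at i <= gam * buy_at k -> rent_at i <= del * rent_at k ->
  cB * gam <= m -> cR * del <= m -> 0 <= m ->
  cost (Ai k) T <= m * cost (Ai k) (final k).
Proof.
move=> lekK costB costR buy_ik rent_ik cBm cRm m_ge0.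
rewrite (cost_split k (final k)) mulrDr mulrCA addrC.
apply: le_trans (cost_le_split T S lekK) _; apply: lerD.
- rewrite ler_wpM2l ?(ltW (Mi_gt0 k)) // (le_trans costB) //.
  exact: ler_mul_of_le_scaled (buy_ge0 _ _) (buy_ge0 _ _) buy_ik cBm m_ge0.
- rewrite (le_trans costR) //.
  exact: ler_mul_of_le_scaled (rent_ge0 _ _) (rent_ge0 _ _) rent_ik cRm m_ge0.
Qed.

End RoutingTrees.

Unset Implicit Arguments.

Theorem lemma5 (R : realType) (V E : finType) (src tgt : E -> V) (l : E -> R)
  (r : V) (dem : {set V}) (d : V -> nat)
  (eps gam del lam : R) (K : nat)
  (T0 Topt : nat -> rtree V E) (T : rtree V E) (cB cR : R) :
  (forall e, 0 <= l e) ->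
  (forall v, v \in dem -> (0 < d v)%N) ->
  0 < eps -> 1 < gam -> 1 < del ->
  (K : int) = Kof eps (\sum_(v in dem) d v)%N ->
  (* optimal routing trees T_i^* for A_i *)
  (forall i, (i <= K)%N -> is_routing_tree src tgt r dem (Topt i) /\
     forall T', is_routing_tree src tgt r dem T' ->
       cost src tgt l r dem d (Ai eps i) (Topt i) <= cost src tgt l r dem d (Ai eps i) T') ->
  (* step (1): outputs of a lambda-approximation algorithm *)
  (forall i, (i <= K)%N -> is_routing_tree src tgt r dem (T0 i) /\
     cost src tgt l r dem d (Ai eps i) (T0 i) <= lam * cost src tgt l r dem d (Ai eps i) (Topt i)) ->
  is_routing_tree src tgt r dem T ->
  (forall i, i \in L src tgt l r dem d eps K T0 gam del ->
     exists S : {set E},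
       S \subset tree_edges r T /\
       costS src tgt l r dem d (Ai eps 0) T S
         <= cB * buy src tgt l r dem d eps i (final src tgt l r dem d eps K T0 i) /\
       costS src tgt l r dem d (Ai eps K) T (tree_edges r T :\: S)
         <= cR * rent src tgt l r dem d eps i (final src tgt l r dem d eps K T0 i)) ->
  forall k, (k <= K)%N ->
    cost src tgt l r dem d (Ai eps k) T
      <= Num.max (cB * gam) (cR * del) * lam * cost src tgt l r dem d (Ai eps k) (Topt k).
Proof.
move=> l_ge0 _ eps_gt0 gam_gt1 del_gt1 _ opt approx T_tree part k lekK.
have [i iL [buy_ik rent_ik]] :=
  exists_selected_index src tgt r dem d l_ge0 eps_gt0 T0 (ltW gam_gt1) (ltW del_gt1) lekK.
have [S [_ [costB costR]]] := part i iL.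
have final_approx :=
  le_trans (final_le_T0 src tgt l r dem d eps T0 lekK) (approx k lekK).2.
have opt_le_T := (opt k lekK).2 T T_tree.
set m := Num.max (cB * gam) (cR * del).
have [cBm cRm] : cB * gam <= m /\ cR * del <= m by rewrite !le_max !lexx orbT.
have scaled_final :=
  cost_le_scaled_final l_ge0 eps_gt0 lekK costB costR buy_ik rent_ik.
have Topt_ge0 := cost_ge0 src tgt r dem d l_ge0 eps_gt0 k (Topt k).
case: (leP 0 m) => [m_ge0|m_lt0].
  by rewrite -mulrA (le_trans (scaled_final _ cBm cRm m_ge0)) // ler_wpM2l.
(* With m < 0 the bound gives A_k(T) <= 0, so the optimum vanishes. *)
have := scaled_final 0 (ltW (le_lt_trans cBm m_lt0)) (ltW (le_lt_trans cRm m_lt0)).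
rewrite mul0r => /(_ (lexx 0)) T_le0.
have -> : cost src tgt l r dem d (Ai eps k) (Topt k) = 0.
  by apply/eqP; rewrite eq_le Topt_ge0 (le_trans opt_le_T T_le0).
by rewrite mulr0.
Qed.
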